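(* Let $n\ge 1$ and let $\Omega=\bigoplus_{j=1}^{n}\begin{pmatrix}0&1\\-1&0\end{pmatrix}$. Let $\sigma$ be a real symmetric $2n\times 2n$ matrix satisfying $\sigma+i\Omega\ge 0$ (i.e. $\sigma$ is an $n$-mode covariance matrix). Let $\lambda^{\uparrow}_1\le\lambda^{\uparrow}_2\le\dots\le\lambda^{\uparrow}_{2n}$ be the eigenvalues of $\sigma$ in increasing order and $\lambda^{\downarrow}_1\ge\lambda^{\downarrow}_2\ge\dots\ge\lambda^{\downarrow}_{2n}$ the same eigenvalues in decreasing order. Then $$\lambda^{\uparrow}_j\,\lambda^{\downarrow}_j\ge 1\qquad\text{for all }1\le j\le n.$$
   Context: For a system of $n$ bosonic modes with canonical operators $\hat{\mathbf R}=(\hat x_1,\hat p_1,\dots,\hat x_n,\hat p_n)^{\sf T}$ obeying $[\hat R_j,\hat R_k]=i\Omega_{jk}$, the covariance matrix (CM) of a state $\varrho$ is $\sigma_{jk}=\mathrm{Tr}(\{\hat R_j,\hat R_k\}\varrho)-2\mathrm{Tr}(\hat R_j\varrho)\mathrm{Tr}(\hat R_k\varrho)$; a real symmetric matrix is a CM of a physical state iff $\sigma+i\Omega\ge0$ (Robertson–Schrödinger uncertainty relation). *)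

From HB Require Import structures.
From mathcomp Require Import all_boot all_order all_algebra.
From mathcomp Require Import complex.
Set Implicit Arguments. Unset Strict Implicit. Unset Printing Implicit Defensive.
Import Order.TTheory GRing.Theory Num.Theory.
Local Open Scope ring_scope.

(* Symplectic form Omega = (+)_{k=1}^n [[0,1],[-1,0]] on 2n indices,
   0-based ordering (x_1,p_1,...,x_n,p_n): Omega_{2k,2k+1}=1, Omega_{2k+1,2k}=-1. *)
Definition Omega (R : rcfType) (n : nat) : 'M[R]_(2 * n) :=
  \matrix_(i < 2 * n, j < 2 * n)
    (if ~~ odd i && (j == i.+1 :> nat) then 1
     else if odd i && (j.+1 == i :> nat) then -1 else 0).

Definition cmx (R : rcfType) (m : nat) (A : 'M[R]_m) : 'M[R[i]]_m :=
  map_mx (fun x => (x%:C)%C) A.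

Definition adjmx (C : numClosedFieldType) (m p : nat) (A : 'M[C]_(m, p)) : 'M[C]_(p, m) :=
  (map_mx Num.conj A)^T.

(* Hermitian positive semidefiniteness: z^dagger H z >= 0 for every complex vector z
   (in a numClosedFieldType, 0 <= w means w is real and nonnegative). *)
Definition psd_cmx (C : numClosedFieldType) (m : nat) (H : 'M[C]_m) : Prop :=
  forall z : 'cV[C]_m, 0 <= (adjmx z *m H *m z) 0 0.

Definition is_CM (R : rcfType) (n : nat) (sigma : 'M[R]_(2 * n)) : Prop :=
  sigma^T = sigma /\ psd_cmx (cmx sigma + (('i)%C) *: cmx (Omega R n)).

Definition eigs_increasing (R : rcfType) (m : nat) (A : 'M[R]_m) (s : seq R) : Prop :=
  [/\ size s = m, sorted <=%R s & char_poly A = \prod_(x <- s) ('X - x%:P)].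

From HB Require Import structures.
From mathcomp Require Import all_boot all_order all_algebra.
From mathcomp Require Import complex spectral sesquilinear ring lra zify.
Set Implicit Arguments. Unset Strict Implicit. Unset Printing Implicit Defensive.
Import Order.TTheory GRing.Theory Num.Theory.
Local Open Scope ring_scope.

(* Let Omega be the symplectic form and u a complex row vector.  Adding the
   positivity of sigma + i Omega at u - i t u Omega to that of its complex
   conjugate sigma - i Omega at u + i t u Omega cancels the cross terms of
   sigma and, as Omega is real, antisymmetric and orthogonal, yields
     <u, sigma u> + t^2 <u Omega, sigma (u Omega)> - 2 t |u|^2 >= 0
   for every real t.  If moreover <u, sigma u> <= a |u|^2 and
   <u Omega, sigma (u Omega)> <= b |u|^2 for some u <> 0, then
   a + t^2 b - 2 t >= 0 for all t, which forces a b >= 1.  For a and b the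
   j-th smallest and j-th largest eigenvalues such a u exists by a dimension
   count: u must lie in the span of the j+1 lowest eigenvectors and u Omega in
   that of the 2n-j lowest ones, two subspaces whose dimensions add up to
   2n+1. *)

Definition partner (i : nat) : nat := if odd i then i.-1 else i.+1.

Lemma odd_partner i : odd (partner i) = ~~ odd i.
Proof. by rewrite /partner; case: i => [|i] //=; case Oi: (odd i); rewrite /= ?Oi. Qed.

Lemma partnerK : involutive partner.
Proof. by move=> [|i] //; rewrite /partner /=; case Oi: (odd i); rewrite /= ?Oi. Qed.

Lemma partner_lt n (i : 'I_(2 * n)) : (partner i < 2 * n)%N.
Proof.
rewrite /partner; case: ifP => odd_i; first exact: leq_ltn_trans (leq_pred _) _.
rewrite ltn_neqAle ltn_ord andbT; apply: contraFneq odd_i => /(congr1 odd) /=.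
by rewrite oddM andFb => /negbFE.
Qed.

Lemma OmegaE (R : rcfType) n (i j : 'I_(2 * n)) :
  Omega R n i j = (-1) ^+ odd i * ((j : nat) == partner i)%:R.
Proof.
rewrite mxE /partner; case Oi: (odd i) => /=; last by rewrite mul1r; case: eqP.
case: (nat_of_ord i) Oi => [//|k] _; rewrite eqSS mulN1r /=.
by case: eqP; rewrite ?mulr1n ?mulr0n ?oppr0.
Qed.

Lemma tr_Omega (R : rcfType) n : (Omega R n)^T = - Omega R n.
Proof.
apply/matrixP => i j; rewrite [LHS]mxE [RHS]mxE !OmegaE.
have [->|ij] := eqVneq (nat_of_ord i) (partner j).
  rewrite partnerK eqxx odd_partner.
  by case: (odd j); rewrite /= ?mulr1n ?mulr1 ?expr1 ?expr0 ?opprK.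
have -> : ((j : nat) == partner i) = false.
  by apply: contra_neqF ij => /eqP ->; rewrite partnerK.
by rewrite !mulr0 oppr0.
Qed.

Lemma Omega_mulmx_tr (R : rcfType) n : Omega R n *m (Omega R n)^T = 1%:M.
Proof.
apply/matrixP => i j; rewrite [LHS]mxE [RHS]mxE (bigD1 (Ordinal (partner_lt i))) //=.
rewrite big1 => [|k /negbTE k_neq]; rewrite [_^T _ _]mxE !OmegaE; last first.
  by rewrite -[(k : nat) == _]/(k == Ordinal (partner_lt i)) k_neq mulr0 mul0r.
rewrite eqxx (inj_eq (inv_inj partnerK)) (inj_eq val_inj) addr0 mulr1.
by case: eqP => [<-|_]; rewrite /= ?mulr0 // mulr1n mulr1 -expr2 sqrr_sign.
Qed.

Lemma sorted_count_le_nth (T : Type) (leT : rel T) (x0 : T) (s : seq T) k :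
  transitive leT -> reflexive leT -> sorted leT s -> (k < size s)%N ->
  (k.+1 <= count (leT^~ (nth x0 s k)) s)%N.
Proof.
move=> leT_tr leT_refl s_sorted k_lt.
rewrite -[s in count _ s](cat_take_drop k.+1) count_cat.
suff: all (leT^~ (nth x0 s k)) (take k.+1 s).
  by rewrite all_count => /eqP ->; rewrite size_takel // leq_addr.
apply/(all_nthP x0) => i; rewrite size_takel // => i_le; rewrite nth_take //.
apply: (sorted_leq_nth leT_tr leT_refl) => //.
exact: leq_trans i_le k_lt.
Qed.

Lemma card_pred_count (T : finType) (U : Type) (f : T -> U) (p : pred U) :
  #|[pred k | p (f k)]| = count p [seq f k | k <- enum T].
Proof. by rewrite count_map -size_filter cardE {1}/enum_mem -enumT. Qed.

Lemma quadratic_ge0_mul_ge1 (R : realFieldType) (a b : R) :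
  (forall t, 0 <= a + t ^+ 2 * b - 2 * t) -> 1 <= a * b.
Proof.
move=> quad_ge0; have [b_gt0|b_le0] := ltrP 0 b.
  have := quad_ge0 b^-1; rewrite expr2 -mulrA mulVf ?gt_eqF // mulr1.
  rewrite [_ - _](_ : _ = a - b^-1); last by ring.
  by rewrite subr_ge0 -div1r ler_pdivrMr.
have := quad_ge0 (`|a| + 1); have := ler_norm a; have := normr_ge0 a.
have : (`|a| + 1) ^+ 2 * b <= 0 by rewrite mulr_ge0_le0 // sqr_ge0.
move: ((`|a| + 1) ^+ 2 * b) (`|a|) => x y; lra.
Qed.

Definition supported_on (V : nmodType) m (K : {pred 'I_m}) (c : 'rV[V]_m) :=
  forall k, k \notin K -> c 0 k = 0.

Section SupportedVectors.
Variable F : fieldType.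

Definition coord_rows m (K : {pred 'I_m}) : 'M[F]_(#|K|, m) :=
  \matrix_(i, k) (k == enum_val i)%:R.

Lemma supported_coord_rows m (K : {pred 'I_m}) (x : 'rV_#|K|) :
  supported_on K (x *m coord_rows K).
Proof.
move=> k kNK; rewrite mxE big1 // => i _; rewrite mxE.
by case: eqP => [k_val|]; [case/negP: kNK; rewrite k_val enum_valP | rewrite mulr0].
Qed.

Lemma mxrank_coord_rows m (K : {pred 'I_m}) : \rank (coord_rows K) = #|K|.
Proof.
apply/eqP; rewrite eqn_leq rank_leq_row /=.
apply: (@mulmx1_min_rank _ _ _ _ _ 1%:M (coord_rows K)^T).
apply/matrixP => i j; rewrite mul1mx !mxE (bigD1 (enum_val i)) //= big1 => [|k k_i].
  by rewrite !mxE eqxx mul1r addr0 (inj_eq enum_val_inj) eq_sym.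
by rewrite !mxE (negbTE k_i) mul0r.
Qed.

Lemma supported_vectors_meet m (M : 'M[F]_m) (K1 K2 : {pred 'I_m}) :
  M \in unitmx -> (m < #|K1| + #|K2|)%N ->
  exists2 c : 'rV_m, c != 0 & supported_on K1 c /\ supported_on K2 (c *m M).
Proof.
move=> M_unit card_gt.
set A := coord_rows K1 *m M; set B := coord_rows K2.
have rankA : \rank A = #|K1| by rewrite mxrankMfree ?row_free_unit ?mxrank_coord_rows.
have := mxrank_sum_cap A B; have := rank_leq_col (A + B)%MS.
rewrite rankA mxrank_coord_rows => sum_le rank_eq.
have /rowV0Pn[v] : (A :&: B)%MS != 0.
  by rewrite -mxrank_eq0; apply: contraTneq card_gt => cap0; rewrite cap0 in rank_eq; lia.
rewrite sub_capmx => /andP[/submxP[x ->] /submxP[y xA_eq]] xA_neq0.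
exists (x *m coord_rows K1); last split.
- by apply: contraNneq xA_neq0; rewrite /A mulmxA => ->; rewrite mul0mx.
- exact: supported_coord_rows.
- by rewrite -mulmxA xA_eq; exact: supported_coord_rows.
Qed.
End SupportedVectors.

Lemma char_poly_similar (R : comUnitRingType) m (P A : 'M[R]_m) :
  P \in unitmx -> char_poly (invmx P *m A *m P) = char_poly A.
Proof.
move=> P_unit; rewrite /char_poly /char_poly_mx !map_mxM.
set Q := map_mx polyC (invmx P); set Q' := map_mx polyC P.
have QQ' : Q *m Q' = 1%:M by rewrite -map_mxM mulVmx // map_mx1.
have X_eq : ('X%:M : 'M_m) = Q *m 'X%:M *m Q'.
  by rewrite mul_mx_scalar -scalemxAl QQ' scalemx1.
by rewrite {1}X_eq -mulmxBl -mulmxBr !det_mulmx mulrAC -det_mulmx QQ' det1 mul1r.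
Qed.

Local Open Scope sesquilinear_scope.

Section HermitianForm.
Variable C : numClosedFieldType.
Implicit Types (m : nat) (a : C).
Local Notation hf := (form Num.conj).

Lemma psd_cmx_form m (H : 'M[C]_m) : psd_cmx H -> forall u : 'rV_m, 0 <= hf H u u.
Proof. by move=> H_psd u; have := H_psd (u ^t*); rewrite /adjmx map_trmx trmxCK. Qed.

Lemma form_addmx m (X Y : 'M[C]_m) (u v : 'rV_m) : hf (X + Y) u v = hf X u v + hf Y u v.
Proof. by rewrite /form mulmxDr mulmxDl mxE. Qed.

Lemma form_scalemx m a (X : 'M[C]_m) (u v : 'rV_m) : hf (a *: X) u v = a * hf X u v.
Proof. by rewrite /form -scalemxAr -scalemxAl mxE. Qed.

Lemma form_conj m (X : 'M[C]_m) (u v : 'rV_m) :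
  hf X (map_mx Num.conj u) (map_mx Num.conj v) = hf X^T v u.
Proof.
rewrite /form -map_trmx map_mxCK -[in LHS](trmxK (_ *m _ *m _)) mxE.
by rewrite !trmx_mul trmxK mulmxA map_trmx.
Qed.

Lemma form_mulmx m (P X : 'M[C]_m) (u v : 'rV_m) :
  hf X (u *m P) (v *m P) = hf (P *m X *m P^t*) u v.
Proof. by rewrite /form trmx_mul map_mxM !mulmxA. Qed.

Lemma form_expand m (X : 'M[C]_m) (u w : 'rV_m) a :
  hf X (u + a *: w) (u + a *: w) =
  hf X u u + a^* * hf X u w + a * hf X w u + a * a^* * hf X w w.
Proof. by rewrite !(formDl, formDr, formZl, formZr) /=; ring. Qed.

Lemma real_symmetric_normalmx m (S : 'M[C]_m) :
  S^T = S -> map_mx Num.conj S = S -> S \is normalmx.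
Proof. by move=> S_sym S_real; apply/normalmxP; rewrite -map_trmx S_real S_sym. Qed.

Lemma perm_eq_spectral_diag m (S : 'M[C]_m) (s : seq C) :
  S \is normalmx -> char_poly S = \prod_(x <- s) ('X - x%:P) ->
  perm_eq [seq spectral_diag S 0 k | k <- enum 'I_m] s.
Proof.
move=> /orthomx_spectralP S_eq char_S; apply: prod_XsubC_eq.
rewrite -char_S [in RHS]S_eq char_poly_similar ?spectral_unit //.
rewrite char_poly_trig ?diag_mx_is_trig // big_map big_enum /=.
by apply: eq_bigr => k _; rewrite mxE eqxx mulr1n.
Qed.

Lemma form1 m (c : 'rV[C]_m) : hf 1%:M c c = \sum_k c 0 k * (c 0 k)^*.
Proof. by rewrite /form mulmx1 mxE; apply: eq_bigr => k _; rewrite !mxE. Qed.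

Lemma form1_gt0 m (c : 'rV[C]_m) : c != 0 -> 0 < hf 1%:M c c.
Proof. by rewrite /form mulmx1 -dotmxE dnorm_gt0. Qed.

Lemma form1_unitary m (P : 'M[C]_m) (c : 'rV_m) :
  P \is unitarymx -> hf 1%:M (c *m P) (c *m P) = hf 1%:M c c.
Proof. by move=> /unitarymxP P_unitary; rewrite form_mulmx mulmx1 P_unitary. Qed.

Lemma form_diag_supported_le m (d c : 'rV[C]_m) a :
  supported_on [pred k | d 0 k <= a] c -> hf (diag_mx d) c c <= a * hf 1%:M c c.
Proof.
move=> c_supp; rewrite form1 mulr_sumr /form mxE; apply: ler_sum => k _.
rewrite mul_mx_diag !mxE mulrAC [a * _]mulrC.
have [d_le|d_gt] := boolP (d 0 k <= a); first by rewrite ler_wpM2l ?mul_conjC_ge0.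
by rewrite c_supp ?inE // !mul0r.
Qed.

Section Uncertainty.
Variables (m : nat) (S W : 'M[C]_m).
Hypotheses (S_sym : S^T = S) (W_skew : W^T = - W) (W_orth : W *m W^T = 1%:M).
Hypotheses (S_real : map_mx Num.conj S = S) (W_real : map_mx Num.conj W = W).
Hypothesis SW_psd : forall z, 0 <= hf (S + 'i *: W) z z.

Lemma form_psdD (z : 'rV_m) : 0 <= hf S z z + 'i * hf W z z.
Proof. by rewrite -form_scalemx -form_addmx. Qed.

Lemma form_psdB (z : 'rV_m) : 0 <= hf S z z - 'i * hf W z z.
Proof.
have := SW_psd (map_mx Num.conj z).
rewrite form_conj linearD /= linearZ /= S_sym W_skew -scaleN1r.
by rewrite form_addmx !form_scalemx mulN1r mulrN.
Qed.

Lemma uncertainty_quadratic_ge0 (u : 'rV_m) (t : C) : t \is Num.real ->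
  0 <= hf S u u + t ^+ 2 * hf S (u *m W) (u *m W) - 2 * t * hf 1%:M u u.
Proof.
move=> t_real; set w := u *m W; set a := 'i * t.
have a_conj : a^* = - a by rewrite rmorphM /= conjCi conj_Creal ?mulNr.
have W_tr : W^t* = W^T by rewrite -map_trmx W_real.
have W_uw : hf W u w = hf 1%:M u u.
  by rewrite /form /w trmx_mul map_mxM W_tr !mulmxA -(mulmxA u) W_orth mulmx1.
have W_wu : hf W w u = - hf 1%:M u u.
  rewrite /form /w -(mulmxA u) -[W *m W]opprK -mulmxN -W_skew W_orth.
  by rewrite mulmxN mulNmx mxE mulmx1.
have := addr_ge0 (form_psdB (u + a *: w)) (form_psdD (u + (- a) *: w)).
rewrite !form_expand rmorphN /= a_conj opprK W_uw W_wu.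
set N := hf 1%:M u u; set A := hf S u u; set D := hf S w w.
rewrite [X in 0 <= X](_ : _ = 2 * (A + t ^+ 2 * D - 2 * t * N)
   + ('i ^+ 2 + 1) * (4 * t * N - 2 * t ^+ 2 * D)); last by rewrite /a; ring.
by rewrite sqrCi addNr mul0r addr0 pmulr_rge0.
Qed.

Lemma spectral_quadratic_ge0 (a b : C) :
  (m < #|[pred k | (spectral_diag S 0 k <= a)%R]|
       + #|[pred k | (spectral_diag S 0 k <= b)%R]|)%N ->
  forall t, t \is Num.real -> 0 <= a + t ^+ 2 * b - 2 * t.
Proof.
move=> card_gt t t_real; set P := spectralmx S.
have P_unitary : P \is unitarymx := spectral_unitarymx S.
have S_diag : P *m S *m P^t* = diag_mx (spectral_diag S).
  have /orthomx_spectralP S_eq := real_symmetric_normalmx S_sym S_real.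
  rewrite [in LHS]S_eq invmx_unitary // !mulmxA (unitarymxP P_unitary).
  by rewrite mul1mx mulmxtVK.
set M := P *m W *m P^t*.
have M_unit : M \in unitmx.
  have W_unit : W \in unitmx := (mulmx1_unit W_orth).1.
  by rewrite !unitmx_mul W_unit (unitarymx_unit P_unitary) unitarymx_unit ?trmxC_unitary.
have [c c_neq0 [c_supp cM_supp]] := supported_vectors_meet M_unit card_gt.
set u := c *m P.
have uW : u *m W = c *m M *m P by rewrite /M !mulmxA mulmxKtV.
have N_gt0 : 0 < hf 1%:M u u by rewrite form1_unitary // form1_gt0.
have Su_le : hf S u u <= a * hf 1%:M u u.
  by rewrite form_mulmx S_diag form1_unitary // form_diag_supported_le.
have SuW_le : hf S (u *m W) (u *m W) <= b * hf 1%:M u u.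
  have W_unitary : W \is unitarymx by apply/unitarymxP; rewrite -map_trmx W_real.
  rewrite -(form1_unitary u W_unitary) uW form1_unitary // form_mulmx S_diag.
  exact: form_diag_supported_le.
have t2_ge0 : 0 <= t ^+ 2 by rewrite real_exprn_even_ge0.
rewrite -(pmulr_rge0 _ N_gt0).
apply: le_trans (uncertainty_quadratic_ge0 u t_real) _.
set N := hf 1%:M u u.
have -> : N * (a + t ^+ 2 * b - 2 * t) = a * N + t ^+ 2 * (b * N) - 2 * t * N by ring.
by rewrite lerD2r lerD // ler_wpM2l.
Qed.
End Uncertainty.
End HermitianForm.

Local Close Scope sesquilinear_scope.

Lemma conj_cmx (R : rcfType) m (A : 'M[R]_m) : map_mx Num.conj (cmx A) = cmx A.
Proof.
by apply/matrixP => i j; rewrite !mxE conj_Creal //; apply/complex_realP; exists (A i j).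
Qed.

Lemma card_le_perm_count (R : rcfType) m (d : 'rV[R[i]]_m) (s : seq R) (x : R) :
  perm_eq [seq d 0 k | k <- enum 'I_m] [seq (y%:C)%C | y <- s] ->
  #|[pred k | (d 0 k <= (x%:C)%C)%R]| = count (<=%R^~ x) s.
Proof.
move=> d_perm; rewrite (card_pred_count (d 0) (<=%R^~ (x%:C)%C)) (permP d_perm).
by rewrite count_map; apply: eq_count => y /=; rewrite lecR.
Qed.

Theorem lemma2 (R : rcfType) (n : nat) (hn : (0 < n)%N)
  (sigma : 'M[R]_(2 * n)) (hCM : is_CM sigma)
  (s : seq R) (hs : eigs_increasing sigma s) :
  forall j : nat, (j < n)%N -> 1 <= s`_j * s`_(2 * n - 1 - j).
Proof.
move=> j j_lt; case: hCM => sigma_sym CM_psd; case: hs => size_s s_sorted char_sigma.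
set S := cmx sigma; set W := cmx (Omega R n).
have S_sym : S^T = S by rewrite /S /cmx map_trmx sigma_sym.
have W_skew : W^T = - W by rewrite /W /cmx map_trmx tr_Omega map_mxN.
have W_orth : W *m W^T = 1%:M.
  by rewrite /W /cmx map_trmx -map_mxM Omega_mulmx_tr map_mx1.
have d_perm : perm_eq [seq spectral_diag S 0 k | k <- enum 'I_(2 * n)]
                      [seq (x%:C)%C | x <- s].
  apply: perm_eq_spectral_diag; first exact: real_symmetric_normalmx (conj_cmx _).
  by rewrite -map_char_poly char_sigma map_prod_XsubC big_map.
have card_gt : (2 * n < #|[pred k | (spectral_diag S 0 k <= (s`_j)%:C%C)%R]|
    + #|[pred k | (spectral_diag S 0 k <= (s`_(2 * n - 1 - j))%:C%C)%R]|)%N.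
  have sorted_count k := @sorted_count_le_nth _ _ 0 s k le_trans lexx s_sorted.
  have [j_lt_s k_lt_s] : (j < size s /\ 2 * n - 1 - j < size s)%N.
    by rewrite size_s; lia.
  rewrite !(card_le_perm_count _ d_perm).
  by apply: leq_trans (leq_add (sorted_count _ j_lt_s) (sorted_count _ k_lt_s)); lia.
have quad_ge0 := spectral_quadratic_ge0 S_sym W_skew W_orth (conj_cmx _) (conj_cmx _)
  (psd_cmx_form CM_psd) card_gt.
apply: quadratic_ge0_mul_ge1 => t; rewrite -ler0c.
have := quad_ge0 (t%:C)%C; rewrite !(rmorphB, rmorphD, rmorphM, rmorphXn, rmorph_nat).
by apply; apply/complex_realP; exists t.
Qed.
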